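(* Let $n=p^2$ where $p$ is prime, and let $k\le\sqrt{n}$. Then the code $\mathcal{C}(r=p,p,S=\{0,1,\dots,k-1\})$ is a binary $k$-PIR code of dimension $n$ with redundancy $k\sqrt{n}$. In particular, for all $k\le\sqrt n$, $r_P(n,k)=\mathcal{O}(k\sqrt n)$.
   Context: Array construction: let $r,p$ be positive integers, $n=rp$, and $S=\{s_0<s_1<\dots<s_{k-1}\}\subseteq\{0,\dots,p-1\}$. For $s,t\in\{0,\dots,p-1\}$ let $D_{s,t}=\{(i,\langle t+is\rangle_p): i=0,\dots,r-1\}$, where $\langle x\rangle_p=x\bmod p$. An information vector $\boldsymbol{x}\in\{0,1\}^n$ is written as an array $(x_{i,j})_{(i,j)\in\{0,\dots,r-1\}\times\{0,\dots,p-1\}}$, and $kp$ redundancy bits are defined by $\rho_{\ell,t}=\sum_{(i,j)\in D_{s_\ell,t}}x_{i,j}\pmod 2$ for $\ell\in\{0,\dots,k-1\}$, $t\in\{0,\dots,p-1\}$. The binary code $\mathcal{C}(r,p,S)$ consists of all words $(\boldsymbol{x},(\rho_{\ell,t})_{\ell,t})$, of length $n+kp$. A binary $k$-PIR code of dimension $n$ and length $N$ is a binary linear code encoding $n$ information bits such that every information bit has $k$ mutually disjoint sets of coordinates from each of which it can be computed; its redundancy is $N-n$, and $r_P(n,k)$ is the minimum redundancy of a binary $k$-PIR code of dimension $n$. *)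

From mathcomp Require Import all_boot all_algebra.
From Stdlib Require Import ClassicalEpsilon.
Set Implicit Arguments. Unset Strict Implicit. Unset Printing Implicit Defensive.
Import GRing.Theory.
Local Open Scope ring_scope.

Definition Dset (r p s t : nat) : {set 'I_r * 'I_p} :=
  [set c : 'I_r * 'I_p | nat_of_ord c.2 == ((t + c.1 * s) %% p)%N].

(* The code C(r,p,S): S is given as the sequence [s_0; ...; s_{k-1}].
   Information coordinates are the array positions (i,j) ('I_r * 'I_p);
   redundancy coordinates are (l,t) ('I_(size S) * 'I_p). *)
Definition Cenc (r p : nat) (S : seq nat)
  (x : {ffun 'I_r * 'I_p -> 'F_2}) :
  {ffun ('I_r * 'I_p) + ('I_(size S) * 'I_p) -> 'F_2} :=
  [ffun c => match c with
             | inl ij => x ij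
             | inr (l, t) =>
                 \sum_(d in Dset r p (nth 0%N S (nat_of_ord (l : 'I_(size S))))
                                      (nat_of_ord (t : 'I_p))) x d
             end].

(* A binary k-PIR code, given by its (linear, injective) encoder from the
   information coordinates I to the codeword coordinates J.  Over F_2,
   additivity is the same as linearity. *)
Definition PIR_code (k : nat) (I J : finType)
  (enc : {ffun I -> 'F_2} -> {ffun J -> 'F_2}) : Prop :=
  (forall x y, enc (x + y) = enc x + enc y) /\
  injective enc /\
  forall i : I, exists R : 'I_k -> {set J},
    (forall a b : 'I_k, a != b -> [disjoint R a & R b]) /\
    (forall (a : 'I_k) (x y : {ffun I -> 'F_2}),
        (forall c, c \in R a -> enc x c = enc y c) -> x i = y i).

Definition has_PIR (n k m : nat) : Prop :=
  exists (I J : finType) (enc : {ffun I -> 'F_2} -> {ffun J -> 'F_2}),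
    #|I| = n /\ (n <= #|J|)%N /\ (#|J| - n)%N = m /\ PIR_code k enc.

Definition has_PIRb (n k m : nat) : bool :=
  if excluded_middle_informative (has_PIR n k m) then true else false.

(* r_P(n,k): the minimum redundancy of a binary k-PIR code of dimension n
   (such codes always exist, e.g. repetition codes; the fallback 0 is never
   used). *)
Definition rP (n k : nat) : nat :=
  match excluded_middle_informative (exists m, has_PIRb n k m) with
  | left ex => ex_minn ex
  | right _ => 0%N
  end.

From Stdlib Require Import ClassicalEpsilon.
From mathcomp Require Import all_boot all_algebra.
From mathcomp Require Import ring.
Set Implicit Arguments. Unset Strict Implicit. Unset Printing Implicit Defensive.
Import GRing.Theory.
Local Open Scope ring_scope.

(* For each slope s in S the parity bits of slope s partition the array into
   the p lines D_{s,t}.  An information bit c lies on exactly one line of each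
   slope, and the parity bit of that line minus the other bits on the line
   gives back x_c.  Reading positions in the field F_p, two lines of distinct
   slopes through c and d force (c_1 - d_1)(s - s') = 0, hence c_1 = d_1 mod p,
   hence c = d because rows differ by less than r <= p.  So the |S| recovery
   sets of c are pairwise disjoint, and there are |S| p redundancy bits. *)

Lemma eqFp_nat p m n : prime p -> (m%:R == n%:R :> 'F_p) = (m == n %[mod p]).
Proof. by move=> p_pr; rewrite -val_eqE /= !val_Fp_nat. Qed.

Lemma Fp_nat_inj p m n : prime p -> (m < p)%N -> (n < p)%N ->
  (m%:R = n%:R :> 'F_p) -> m = n.
Proof. by move=> p_pr m_lt n_lt /eqP; rewrite eqFp_nat // !modn_small // => /eqP. Qed.

Section Encoder.

Variables (r p : nat) (S : seq nat).

Lemma CencD x y : @Cenc r p S (x + y) = Cenc S x + Cenc S y.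
Proof.
apply/ffunP => -[c | [l t]]; rewrite !ffunE //= -big_split.
by apply: eq_bigr => d _; rewrite ffunE.
Qed.

Lemma Cenc_inj : injective (@Cenc r p S).
Proof.
by move=> x y /ffunP eq_xy; apply/ffunP => c; have := eq_xy (inl c); rewrite !ffunE.
Qed.

Lemma Cenc_decode (x : {ffun 'I_r * 'I_p -> 'F_2}) (l : 'I_(size S)) (t : 'I_p) c :
    c \in Dset r p (nth 0%N S l) t ->
  x c = @Cenc r p S x (inr (l, t))
        - \sum_(d in Dset r p (nth 0%N S l) t :\ c) Cenc S x (inl d).
Proof.
move=> c_in; rewrite ffunE /= (big_setD1 _ c_in) /= [X in _ - X](eq_bigr x) ?addrK //.
by move=> d _; rewrite ffunE.
Qed.

End Encoder.

Section Lines.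

Variables (r p : nat).
Hypothesis p_pr : prime p.

Lemma mem_Dset s t (c : 'I_r * 'I_p) :
  (c \in Dset r p s t) = ((c.2 : nat)%:R == t%:R + c.1%:R * s%:R :> 'F_p).
Proof. by rewrite inE -{1}(modn_small (ltn_ord c.2)) -natrM -natrD eqFp_nat. Qed.

Definition line_start (s : nat) (c : 'I_r * 'I_p) : 'I_p :=
  cast_ord (Fp_cast p_pr) ((c.2 : nat)%:R - c.1%:R * s%:R : 'F_p).

Lemma line_startE s c :
  (line_start s c : nat)%:R = (c.2 : nat)%:R - c.1%:R * s%:R :> 'F_p.
Proof. exact: natr_Zp. Qed.

Lemma mem_Dset_line_start s c : c \in Dset r p s (line_start s c).
Proof. by rewrite mem_Dset line_startE subrK. Qed.

Hypothesis r_le_p : (r <= p)%N.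

Lemma Dset_meet s s' t t' c d : (s%:R != s'%:R :> 'F_p) ->
  c \in Dset r p s t -> c \in Dset r p s' t' ->
  d \in Dset r p s t -> d \in Dset r p s' t' -> c = d.
Proof.
case: c d => [c1 c2] [d1 d2] neq_s; rewrite !mem_Dset /=.
move=> /eqP c_s /eqP c_s' /eqP d_s /eqP d_s'.
have : ((c1 : nat)%:R - (d1 : nat)%:R) * (s%:R - s'%:R) = 0 :> 'F_p.
  have -> : ((c1 : nat)%:R - (d1 : nat)%:R) * (s%:R - s'%:R) =
    (t%:R + c1%:R * s%:R - (t%:R + d1%:R * s%:R))
    - (t'%:R + c1%:R * s'%:R - (t'%:R + d1%:R * s'%:R)) :> 'F_p by ring.
  by rewrite -c_s -d_s -c_s' -d_s' subrr.
move/eqP; rewrite mulf_eq0 !subr_eq0 (negPf neq_s) orbF => /eqP eq_rows.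
have lt_p (i : 'I_r) : (i < p)%N by apply: leq_trans r_le_p.
have {}eq_rows : c1 = d1.
  by apply: val_inj; exact: Fp_nat_inj p_pr (lt_p c1) (lt_p d1) eq_rows.
have eq_cols : c2 = d2.
  apply: val_inj; apply: (Fp_nat_inj p_pr (ltn_ord c2) (ltn_ord d2)).
  by rewrite c_s d_s eq_rows.
by rewrite eq_rows eq_cols.
Qed.

End Lines.

Section RecoverySets.

Variables (r p : nat) (S : seq nat).
Hypotheses (p_pr : prime p) (r_le_p : (r <= p)%N).
Hypotheses (S_uniq : uniq S) (S_lt_p : forall s, s \in S -> (s < p)%N).

Definition recovery_line (l : 'I_(size S)) (c : 'I_r * 'I_p) : {set 'I_r * 'I_p} :=
  Dset r p (nth 0%N S l) (line_start p_pr (nth 0%N S l) c).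

Definition recovery_set (c : 'I_r * 'I_p) (l : 'I_(size S)) :
    {set ('I_r * 'I_p) + ('I_(size S) * 'I_p)} :=
  [set z | match z with
           | inl d => d \in recovery_line l c :\ c
           | inr q => q == (l, line_start p_pr (nth 0%N S l) c)
           end].

Lemma slope_neq (l l' : 'I_(size S)) :
  l != l' -> (nth 0%N S l)%:R != (nth 0%N S l')%:R :> 'F_p.
Proof.
apply: contra => /eqP /(Fp_nat_inj p_pr); rewrite !S_lt_p ?mem_nth // => /(_ isT isT) /eqP.
by rewrite nth_uniq.
Qed.

Lemma recovery_sets_disjoint c (a b : 'I_(size S)) : a != b ->
  [disjoint recovery_set c a & recovery_set c b].
Proof.
move=> neq_ab; rewrite -setI_eq0; apply/eqP/setP => -[d | q].
- rewrite in_setI in_set0 ![inl d \in _]in_set !in_setD1.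
  apply/negP => /andP[/andP[neq_dc d_a] /andP[_ d_b]]; move/eqP: neq_dc; apply.
  by apply: (Dset_meet p_pr r_le_p (slope_neq neq_ab) d_a d_b); apply: mem_Dset_line_start.
- rewrite !inE; apply/negP => /andP[/eqP-> /eqP[eq_ab _]].
  by rewrite eq_ab eqxx in neq_ab.
Qed.

Lemma recovery_set_recovers c l (x y : {ffun 'I_r * 'I_p -> 'F_2}) :
  (forall z, z \in recovery_set c l -> Cenc S x z = Cenc S y z) -> x c = y c.
Proof.
move=> eq_xy; have c_in := mem_Dset_line_start p_pr (nth 0%N S l) c.
rewrite (Cenc_decode x c_in) (Cenc_decode y c_in) eq_xy ?inE //.
by congr (_ - _); apply: eq_bigr => d d_in; rewrite eq_xy // inE.
Qed.

Lemma Cenc_PIR : PIR_code (size S) (@Cenc r p S).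
Proof.
split; [exact: CencD | split; [exact: Cenc_inj | move=> c]].
exists (recovery_set c); split; first exact: recovery_sets_disjoint.
exact: recovery_set_recovers.
Qed.

End RecoverySets.

Lemma card_Cenc_info r p : #|{: 'I_r * 'I_p}| = (r * p)%N.
Proof. by rewrite card_prod !card_ord. Qed.

Lemma card_Cenc_redundancy r p k :
  (#|{: ('I_r * 'I_p) + ('I_k * 'I_p)}| - r * p)%N = (k * p)%N.
Proof. by rewrite card_sum !card_prod !card_ord addKn. Qed.

Lemma Cenc_has_PIR r p S : prime p -> (r <= p)%N -> uniq S ->
  (forall s, s \in S -> (s < p)%N) -> has_PIR (r * p) (size S) (size S * p).
Proof.
move=> p_pr r_le_p S_uniq S_lt_p; exists _, _, (@Cenc r p S).
split; first exact: card_Cenc_info.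
split; first by rewrite card_sum card_Cenc_info leq_addr.
by split; [exact: card_Cenc_redundancy | exact: Cenc_PIR].
Qed.

Lemma rP_le n k m : has_PIR n k m -> (rP n k <= m)%N.
Proof.
have PIRbP : has_PIR n k m -> has_PIRb n k m.
  by rewrite /has_PIRb; case: excluded_middle_informative.
move/PIRbP=> PIRb_m; rewrite /rP.
case: excluded_middle_informative => [ex | []]; last by exists m.
by case: ex_minnP => m' _; apply.
Qed.

Theorem theorem8 (p k : nat) (hp : prime p) (hk : (k <= p)%N) :
  PIR_code k (@Cenc p p (iota 0 k)) /\
  #|{: 'I_p * 'I_p}| = (p ^ 2)%N /\
  (#|{: ('I_p * 'I_p) + ('I_(size (iota 0 k)) * 'I_p)}| - p ^ 2)%N = (k * p)%N /\
  (rP (p ^ 2) k <= k * p)%N.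
Proof.
have S_lt_p s : s \in iota 0 k -> (s < p)%N.
  by rewrite mem_iota => /andP[_ s_lt_k]; apply: leq_trans hk.
split.
  by rewrite -{1}(size_iota 0 k); exact: Cenc_PIR hp (leqnn p) (iota_uniq 0 k) S_lt_p.
split; first by rewrite card_Cenc_info mulnn.
split; first by rewrite -mulnn card_Cenc_redundancy size_iota.
apply: rP_le; rewrite -mulnn -(size_iota 0 k).
exact: Cenc_has_PIR (iota_uniq 0 k) S_lt_p.
Qed.
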